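(* Let $\mathcal{G}$ be a multi-layer graph with $l$ layers, $d,s,k\in\mathbb{N}$ with $k\ge1$, and $\mathcal{R}$ a collection of exactly $k$ subsets of $V(\mathcal{G})$. Let $L\subseteq\{1,\dots,l\}$ with $|L|>s$, and let $U$ be a potential vertex set for $L$, i.e., $U\subseteq V(\mathcal{G})$ with $C^d_S(\mathcal{G})\subseteq U$ for every top-down descendant $S$ of $L$ with $|S|=s$. If $|\mathsf{Cov}((\mathcal{R}-\{C^*(\mathcal{R})\})\cup\{U\})|<(1+\frac1k)|\mathsf{Cov}(\mathcal{R})|$, then every top-down descendant $S$ of $L$ with $|S|=s$ satisfies $|\mathsf{Cov}((\mathcal{R}-\{C^*(\mathcal{R})\})\cup\{C^d_S(\mathcal{G})\})|<(1+\frac1k)|\mathsf{Cov}(\mathcal{R})|$.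
   Context: A multi-layer graph $\mathcal{G}=(V,E_1,\dots,E_l)$ consists of a finite vertex set $V$ and edge sets $E_i$ of simple undirected graphs $G_i=(V,E_i)$. A graph is $d$-dense if every vertex has degree at least $d$; the $d$-coherent core $C^d_L(\mathcal{G})$ is the unique maximal $S\subseteq V$ such that the induced subgraph $G_i[S]$ is $d$-dense for all $i\in L$. Top-down search tree on subsets of $\{1,\dots,l\}$: $L$ is the parent of $L'$ if $L'=L-\{\ell\}$ for some $\ell\in L$ with $\ell>\max(\{1,\dots,l\}-L)$ ($\max(\emptyset)=-\infty$); top-down descendants of $L$ are obtained by iterating the child relation. For a collection $\mathcal{R}$ of sets, $\mathsf{Cov}(\mathcal{R})=\bigcup_{R\in\mathcal{R}}R$; for $C'\in\mathcal{R}$, $\Delta(\mathcal{R},C')=C'-\mathsf{Cov}(\mathcal{R}-\{C'\})$; $C^*(\mathcal{R})$ is a fixed element of $\mathcal{R}$ minimizing $|\Delta(\mathcal{R},C')|$. *)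

From mathcomp Require Import all_boot all_order all_algebra.
Set Implicit Arguments. Unset Strict Implicit. Unset Printing Implicit Defensive.

(* Layers are indexed by 'I_l (i.e. {0,...,l-1} instead of {1,...,l}). *)
(* A multi-layer graph on vertex type V : finType is E : 'I_l -> rel V,
   each layer symmetric and irreflexive (simple undirected). *)
Definition simple_layers (V : finType) (l : nat) (E : 'I_l -> rel V) : Prop :=
  forall i : 'I_l, symmetric (E i) /\ irreflexive (E i).

Definition dense_in (V : finType) (e : rel V) (d : nat) (S : {set V}) : bool :=
  [forall v in S, d <= #|[set u in S | e v u]|].

Definition coherent (V : finType) (l : nat) (E : 'I_l -> rel V) (d : nat)
    (L : {set 'I_l}) (S : {set V}) : bool :=
  [forall i in L, dense_in (E i) d S].

(* the d-coherent core: the union of all coherent sets, which is the unique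
   maximal coherent set (unions of coherent sets are coherent). *)
Definition core (V : finType) (l : nat) (E : 'I_l -> rel V) (d : nat)
    (L : {set 'I_l}) : {set V} :=
  \bigcup_(S | coherent E d L S) S.

Definition td_child (l : nat) (L L' : {set 'I_l}) : bool :=
  [exists ell in L, (L' == L :\ ell) && [forall j in ~: L, j < ell]].

(* top-down descendants (reflexive-transitive closure; reflexivity is
   harmless below since descendants of interest have size s < |L|) *)
Definition td_desc (l : nat) (L S : {set 'I_l}) : bool :=
  connect (@td_child l) L S.

Definition Cov (V : finType) (R : {set {set V}}) : {set V} :=
  \bigcup_(C in R) C.

Definition Delta (V : finType) (R : {set {set V}}) (C : {set V}) : {set V} :=
  C :\: Cov (R :\ C).

From mathcomp Require Import all_boot all_order all_algebra.
Import Order.TTheory GRing.Theory Num.Theory.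

(* Replacing one member of a collection by a larger set can only enlarge the
   cover; the potential set U contains every core C^d_S, so the cover bound
   for U transfers to each C^d_S.  None of the graph structure is needed. *)

Lemma Cov_setU1 (V : finType) (R : {set {set V}}) (A : {set V}) :
  Cov (R :|: [set A]) = Cov R :|: A.
Proof. by rewrite /Cov bigcup_setU big_set1. Qed.

Lemma Cov_setU1S (V : finType) (R : {set {set V}}) (A B : {set V}) :
  A \subset B -> Cov (R :|: [set A]) \subset Cov (R :|: [set B]).
Proof. by move=> sAB; rewrite !Cov_setU1 setUS. Qed.

Theorem lemma5 (V : finType) (l : nat) (E : 'I_l -> rel V)
    (d s k : nat) (R : {set {set V}}) (Cstar : {set V})
    (L : {set 'I_l}) (U : {set V}) :
  simple_layers E ->
  (1 <= k)%N ->
  #|R| = k ->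
  Cstar \in R ->
  (forall C, C \in R -> (#|Delta R Cstar| <= #|Delta R C|)%N) ->
  (s < #|L|)%N ->
  (forall S, td_desc L S -> #|S| = s -> core E d S \subset U) ->
  ((#|Cov ((R :\ Cstar) :|: [set U])|%:R : rat)
     < (1 + (k%:R)^-1) * (#|Cov R|%:R))%R ->
  forall S, td_desc L S -> #|S| = s ->
  ((#|Cov ((R :\ Cstar) :|: [set core E d S])|%:R : rat)
     < (1 + (k%:R)^-1) * (#|Cov R|%:R))%R.
Proof.
move=> _ _ _ _ _ _ core_sub_U cover_U_lt S desc_S card_S.
apply: le_lt_trans cover_U_lt; rewrite ler_nat.
exact/subset_leq_card/Cov_setU1S/core_sub_U.
Qed.
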